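(* Let $X\in C^\infty(\mathbb T;\mathbb R)$ have at least one zero and assume all its zeroes are non-degenerate (i.e. $X(x_0)=0\Rightarrow X'(x_0)\neq0$). Let $h(x,\xi):=\xi X(x)$ on $T^*\mathbb T\simeq\mathbb T\times\mathbb R$. Then there exist a function $a\in C^\infty(T^*\mathbb T\setminus\{\xi=0\};\mathbb R)$, positively homogeneous of degree one, and $\delta>0$ such that $$\{h,a\}(x,\xi)\ge\delta|\xi|\qquad\forall (x,\xi)\in T^*\mathbb T,\ \xi\neq0,$$ and there exists a non-empty open set $\mathcal W\subset\mathbb T$ such that $a(x,\xi)\le-\frac{|\xi|}2$ for all $x\in\mathcal W$ and $\xi\neq0$.
   Context: $\mathbb T:=\mathbb R/2\pi\mathbb Z$. Poisson bracket: $\{h,f\}:=\partial_\xi h\,\partial_xf-\partial_xh\,\partial_\xi f$. A function $f$ on $T^*\mathbb T\setminus\{\xi=0\}$ is positively homogeneous of degree $\rho$ if $f(x,\lambda\xi)=\lambda^\rho f(x,\xi)$ for all $\lambda>0$. A function $a$ with the stated properties is called an escape function for $h$. *)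

From Stdlib Require Import Reals Lra List.
From Coquelicot Require Import Coquelicot.
Open Scope R_scope.

(* Functions on T = R/2piZ are represented as 2pi-periodic functions on R
   (in the first variable for functions on T^*T = T x R). *)
Definition periodic1 (f : R -> R) : Prop := forall x, f (x + 2 * PI) = f x.
Definition periodic2 (f : R -> R -> R) : Prop :=
  forall x xi, f (x + 2 * PI) xi = f x xi.

Definition smooth1 (f : R -> R) : Prop :=
  forall (n : nat) (x : R), ex_derive (Derive_n f n) x.

(* Iterated partial derivative along a word of directions
   (true = d/dx, false = d/dxi), innermost derivative last in the list. *)
Fixpoint pderiv (w : list bool) (f : R -> R -> R) : R -> R -> R :=
  match w with
  | nil => f
  | b :: w' =>
      let g := pderiv w' f in
      if b then fun x xi => Derive (fun t => g t xi) x
      else fun x xi => Derive (fun e => g x e) xi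
  end.

Definition smooth2_on (U : R -> R -> Prop) (f : R -> R -> R) : Prop :=
  forall w : list bool, forall x xi, U x xi ->
    ex_derive (fun t => pderiv w f t xi) x /\
    ex_derive (fun e => pderiv w f x e) xi /\
    continuous (fun p : R * R => pderiv w f (fst p) (snd p)) (x, xi).

Definition off_zero (x xi : R) : Prop := xi <> 0.

Definition pos_homogeneous (rho : R) (f : R -> R -> R) : Prop :=
  forall x xi lam, xi <> 0 -> 0 < lam -> f x (lam * xi) = Rpower lam rho * f x xi.

Definition poisson (h f : R -> R -> R) (x xi : R) : R :=
  Derive (fun e => h x e) xi * Derive (fun t => f t xi) x
  - Derive (fun t => h t xi) x * Derive (fun e => f x e) xi.

From Stdlib Require Import Reals Lra Lia ZArith List Classical.
From Coquelicot Require Import Coquelicot.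
Open Scope R_scope.

(* For the symbol a(x, xi) = |xi| q(x) one has {h, a} = |xi| (X q' - X' q), so it suffices
   to find a smooth periodic q with X q' - X' q >= delta > 0 that is negative somewhere.
   With q = - X' + X V this Wronskian equals X'^2 - X X'' + X^2 V'.  Nondegeneracy of the
   zeroes gives X'^2 + X^2 >= c > 0, hence X'^2 - X X'' + A X^2 >= 3c/4 for A large, and it
   remains to choose V' = w periodic of mean zero with X^2 w >= A X^2 - c/4.  Take
   w = B (J / 2pi - 1 / (X^2 + eta)) with J the mean of 1 / (X^2 + eta) over a period:
   near a zero of X this integrand is of size 1/eta on an interval of length ~ sqrt eta,
   so J can be made as large as needed.  The constant of integration in V then makes q
   equal to -1 at a point where X does not vanish. *)

Fixpoint derivable_upto (n : nat) (f : R -> R) : Prop :=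
  (forall x, ex_derive f x) /\
  match n with O => True | S k => derivable_upto k (Derive f) end.

Definition smooth (f : R -> R) : Prop := forall n, derivable_upto n f.

Lemma smooth_ex_derive f : smooth f -> forall x, ex_derive f x.
Proof. intros H; exact (proj1 (H O)). Qed.

Lemma smooth_is_derive f : smooth f -> forall x, is_derive f x (Derive f x).
Proof. intros H x; apply Derive_correct, smooth_ex_derive, H. Qed.

Lemma smooth_continuous f : smooth f -> forall x, continuous f x.
Proof. intros H x; apply (ex_derive_continuous f), smooth_ex_derive, H. Qed.

Lemma smooth_Derive f : smooth f -> smooth (Derive f).
Proof. intros H n; exact (proj2 (H (S n))). Qed.

Lemma derivable_upto_ext n : forall f g,
  (forall x, f x = g x) -> derivable_upto n f -> derivable_upto n g.
Proof.
induction n as [|n IH]; intros f g E [Hd Hn]; split;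
  try (intro x; apply ex_derive_ext with f; auto); auto.
apply IH with (Derive f); auto. intro x; apply Derive_ext; auto.
Qed.

Lemma smooth1_smooth f : smooth1 f <-> smooth f.
Proof.
split.
- intros H n; revert f H; induction n as [|n IH]; intros f H;
    split; try exact (H O); auto.
  apply IH; intros k x.
  apply ex_derive_ext with (Derive_n f (S k)); [|apply H].
  intro t; replace (S k) with (k + 1)%nat by lia; rewrite <- (Derive_n_comp f k 1); reflexivity.
- intros H n; revert f H; induction n as [|n IH]; intros f H x.
  + apply smooth_ex_derive, H.
  + apply ex_derive_ext with (Derive_n (Derive f) n).
    * intro t; rewrite (Derive_n_comp f n 1); replace (n + 1)%nat with (S n) by lia; reflexivity.
    * apply IH, smooth_Derive, H.
Qed.

Lemma derivable_upto_S n f : derivable_upto (S n) f -> derivable_upto n f.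
Proof.
revert f; induction n as [|n IH]; intros f [Hd Hn]; split; auto.
Qed.

Lemma derivable_upto_const n c : derivable_upto n (fun _ => c).
Proof.
revert c; induction n as [|n IH]; intro c; split;
  try (intro; apply ex_derive_const); auto.
apply derivable_upto_ext with (fun _ => 0); auto.
intro; symmetry; apply Derive_const.
Qed.

Lemma derivable_upto_plus n : forall f g, derivable_upto n f -> derivable_upto n g ->
  derivable_upto n (fun x => f x + g x).
Proof.
induction n as [|n IH]; intros f g [Hf Hf'] [Hg Hg']; split;
  try (intro; apply (ex_derive_plus f g); auto); auto.
apply derivable_upto_ext with (fun x => Derive f x + Derive g x).
- intro; symmetry; apply Derive_plus; auto.
- apply IH; auto.
Qed.

Lemma derivable_upto_opp n : forall f, derivable_upto n f ->
  derivable_upto n (fun x => - f x).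
Proof.
induction n as [|n IH]; intros f [Hf Hf']; split;
  try (intro; apply (ex_derive_opp f); auto); auto.
apply derivable_upto_ext with (fun x => - Derive f x).
- intro; symmetry; apply Derive_opp.
- apply IH; auto.
Qed.

Lemma derivable_upto_mult n : forall f g, derivable_upto n f -> derivable_upto n g ->
  derivable_upto n (fun x => f x * g x).
Proof.
induction n as [|n IH]; intros f g Hf Hg;
  destruct Hf as [Df Hf'], Hg as [Dg Hg']; split;
  try (intro; apply (ex_derive_mult f g); auto); auto.
apply derivable_upto_ext with (fun x => Derive f x * g x + f x * Derive g x).
- intro; symmetry; apply Derive_mult; auto.
- apply derivable_upto_plus; apply IH; auto; apply derivable_upto_S; split; auto.
Qed.

Lemma derivable_upto_inv n : forall f, (forall x, f x <> 0) -> derivable_upto n f ->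
  derivable_upto n (fun x => / f x).
Proof.
induction n as [|n IH]; intros f Hnz [Df Hf']; split;
  try (intro; apply (ex_derive_inv f); auto); auto.
apply derivable_upto_ext with (fun x => - Derive f x * (/ f x * / f x)).
- intro x; rewrite Derive_inv; auto. field; auto.
- apply derivable_upto_mult; [apply derivable_upto_opp; auto|].
  apply derivable_upto_mult; apply IH; auto; apply derivable_upto_S; split; auto.
Qed.

Lemma smooth_const c : smooth (fun _ => c).
Proof. intro; apply derivable_upto_const. Qed.

Lemma smooth_plus f g : smooth f -> smooth g -> smooth (fun x => f x + g x).
Proof. intros Hf Hg n; apply derivable_upto_plus; auto. Qed.

Lemma smooth_opp f : smooth f -> smooth (fun x => - f x).
Proof. intros Hf n; apply derivable_upto_opp; auto. Qed.

Lemma smooth_minus f g : smooth f -> smooth g -> smooth (fun x => f x - g x).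
Proof. intros Hf Hg; apply smooth_plus, smooth_opp; auto. Qed.

Lemma smooth_mult f g : smooth f -> smooth g -> smooth (fun x => f x * g x).
Proof. intros Hf Hg n; apply derivable_upto_mult; auto. Qed.

Lemma smooth_pow f n : smooth f -> smooth (fun x => f x ^ n).
Proof.
intro Hf; induction n as [|n IH]; [exact (smooth_const 1)|].
apply (smooth_mult f (fun x => f x ^ n)); auto.
Qed.

Lemma smooth_inv f : (forall x, f x <> 0) -> smooth f -> smooth (fun x => / f x).
Proof. intros Hnz Hf n; apply derivable_upto_inv; auto. Qed.

Lemma is_derive_RInt_continuous (w : R -> R) a : (forall x, continuous w x) ->
  forall x, is_derive (fun y => RInt w a y) x (w x).
Proof.
intros Hc x; apply (is_derive_RInt w (fun y => RInt w a y) a); auto.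
apply filter_forall; intro b; apply (@RInt_correct R_CompleteNormedModule).
apply (@ex_RInt_continuous R_CompleteNormedModule); auto.
Qed.

Lemma smooth_RInt w a : smooth w -> smooth (fun y => RInt w a y).
Proof.
intros Hw n.
pose proof (is_derive_RInt_continuous w a (smooth_continuous w Hw)) as D.
destruct n as [|n]; split; auto; try (intro x; eexists; apply D).
apply derivable_upto_ext with w; auto.
intro x; symmetry; apply is_derive_unique, D.
Qed.

Lemma smooth_ex_RInt f a b : smooth f -> ex_RInt f a b.
Proof.
intro H; apply (@ex_RInt_continuous R_CompleteNormedModule).
intros; apply smooth_continuous, H.
Qed.

Lemma is_derive_shift (f : R -> R) x c l :
  is_derive f (x + c) l -> is_derive (fun y => f (y + c)) x l.
Proof.
intro H; replace l with (scal 1 l) by (change (1 * l = l); ring).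
apply (is_derive_comp f (fun y => y + c)); auto. auto_derive; auto.
Qed.

Lemma periodic1_Derive f : smooth f -> periodic1 f -> periodic1 (Derive f).
Proof.
intros S P x.
assert (H : is_derive (fun y => f (y + 2 * PI)) x (Derive f (x + 2 * PI)))
  by (apply is_derive_shift, smooth_is_derive, S).
rewrite <- (is_derive_unique _ _ _ H); apply Derive_ext, P.
Qed.

Lemma periodic1_shift f : periodic1 f -> forall k x, f (x + IZR k * (2 * PI)) = f x.
Proof.
intros P k; induction k as [|k IH|k IH] using Z.peano_ind; intro x.
- f_equal; ring.
- rewrite <- (IH x), <- (P (x + IZR k * (2 * PI))), succ_IZR; f_equal; ring.
- rewrite <- (IH x), <- (P (x + IZR (Z.pred k) * (2 * PI))), <- Z.sub_1_r, minus_IZR; f_equal; ring.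
Qed.

Lemma periodic1_reduce f : periodic1 f -> forall x, exists y, 0 <= y <= 2 * PI /\ f x = f y.
Proof.
intros P x. pose proof PI_RGT_0.
set (k := Int_part (x / (2 * PI))).
destruct (base_Int_part (x / (2 * PI))) as [H1 H2]; fold k in H1, H2.
exists (x + IZR (- k) * (2 * PI)); split; [|symmetry; apply periodic1_shift, P].
rewrite opp_IZR.
assert (IZR k * (2 * PI) <= x < (IZR k + 1) * (2 * PI)); [|lra].
split.
- apply Rmult_le_reg_r with (/ (2 * PI)); [apply Rinv_0_lt_compat; lra|].
  rewrite Rmult_assoc, Rinv_r by lra; lra.
- apply Rmult_lt_reg_r with (/ (2 * PI)); [apply Rinv_0_lt_compat; lra|].
  rewrite Rmult_assoc, Rinv_r by lra; unfold Rdiv in *; lra.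
Qed.

Lemma periodic1_attains_min f : periodic1 f -> (forall x, continuous f x) ->
  exists y, forall x, f y <= f x.
Proof.
intros P Hc. pose proof PI_RGT_0.
destruct (continuity_ab_min f 0 (2 * PI)) as [m [Hm _]]; [lra| |].
- intros c _; apply continuity_pt_filterlim, Hc.
- exists m; intro x; destruct (periodic1_reduce f P x) as [y [Hy ->]]; auto.
Qed.

Lemma periodic1_attains_max f : periodic1 f -> (forall x, continuous f x) ->
  exists y, forall x, f x <= f y.
Proof.
intros P Hc. pose proof PI_RGT_0.
destruct (continuity_ab_maj f 0 (2 * PI)) as [m [Hm _]]; [lra| |].
- intros c _; apply continuity_pt_filterlim, Hc.
- exists m; intro x; destruct (periodic1_reduce f P x) as [y [Hy ->]]; auto.
Qed.

Lemma periodic1_RInt w a : smooth w -> periodic1 w -> RInt w a (a + 2 * PI) = 0 ->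
  periodic1 (fun x => RInt w a x).
Proof.
intros Hs P H0.
set (v := fun x => RInt w a x).
assert (Dv : forall x, is_derive v x (w x))
  by (apply is_derive_RInt_continuous, smooth_continuous, Hs).
set (G := fun x => v (x + 2 * PI) - v x).
assert (DG : forall x, is_derive G x 0).
{ intro x; replace 0 with (w (x + 2 * PI) - w x) by (rewrite P; ring).
  apply (@is_derive_minus R_AbsRing R_NormedModule); [apply is_derive_shift|]; apply Dv. }
assert (Ga : G a = 0).
{ unfold G, v; rewrite RInt_point, H0; apply Rminus_0_r. }
intro x; change (v (x + 2 * PI) = v x).
destruct (MVT_gen G a x (fun _ => 0)) as [c [_ Hc]].
- intros; apply DG.
- intros y _; apply continuity_pt_filterlim, (ex_derive_continuous G); eexists; apply DG.
- unfold G in *; lra.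
Qed.

Definition abs_deriv (k : nat) (xi : R) : R :=
  match k with O => Rabs xi | 1%nat => sign xi | _ => 0 end.

Fixpoint x_order (w : list bool) : nat :=
  match w with nil => O | b :: w' => if b then S (x_order w') else x_order w' end.

Fixpoint xi_order (w : list bool) : nat :=
  match w with nil => O | b :: w' => if b then xi_order w' else S (xi_order w') end.

Lemma locally_neq0 (xi : R) : xi <> 0 -> locally xi (fun e => e <> 0).
Proof.
intro H; destruct (Rlt_or_le 0 xi).
- apply (locally_open (fun u => 0 < u)); [apply open_gt|intros; lra|auto].
- apply (locally_open (fun u => u < 0)); [apply open_lt|intros; lra|lra].
Qed.

Lemma is_derive_abs_deriv k xi : xi <> 0 -> is_derive (abs_deriv k) xi (abs_deriv (S k) xi).
Proof.
intro H; destruct k as [|[|k]]; simpl.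
- rewrite <- (Rmult_1_r (sign xi)).
  apply (is_derive_Rabs (fun y => y)); auto. apply (@is_derive_id R_AbsRing).
- destruct (Rlt_or_le 0 xi).
  + apply is_derive_ext_loc with (fun _ => 1); [|apply (@is_derive_const R_AbsRing)].
    apply (locally_open (fun u => 0 < u)); [apply open_gt| |auto].
    intros; rewrite sign_eq_1; auto.
  + apply is_derive_ext_loc with (fun _ => -1); [|apply (@is_derive_const R_AbsRing)].
    apply (locally_open (fun u => u < 0)); [apply open_lt| |lra].
    intros; rewrite sign_eq_m1; auto.
- apply (@is_derive_const R_AbsRing).
Qed.

Lemma continuous_abs_deriv k xi : xi <> 0 -> continuous (abs_deriv k) xi.
Proof.
intro H; apply (ex_derive_continuous (abs_deriv k)).
eexists; apply is_derive_abs_deriv, H.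
Qed.

Lemma pderiv_abs_mult (q : R -> R) w x xi : xi <> 0 ->
  pderiv w (fun x xi => Rabs xi * q x) x xi
  = abs_deriv (xi_order w) xi * Derive_n q (x_order w) x.
Proof.
revert x xi; induction w as [|[] w IH]; intros x xi H; simpl; auto.
- rewrite (Derive_ext _ (fun t => abs_deriv (xi_order w) xi * Derive_n q (x_order w) t)).
  + apply Derive_scal.
  + intro; apply IH, H.
- rewrite (Derive_ext_loc _ (fun e => Derive_n q (x_order w) x * abs_deriv (xi_order w) e)).
  + rewrite Derive_scal, (is_derive_unique _ _ _ (is_derive_abs_deriv _ xi H)).
    apply Rmult_comm.
  + apply filter_imp with (2 := locally_neq0 xi H).
    intros e He; rewrite IH; auto; apply Rmult_comm.
Qed.

Lemma smooth2_on_abs_mult (q : R -> R) : smooth1 q ->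
  smooth2_on off_zero (fun x xi => Rabs xi * q x).
Proof.
intros Hq w x xi H; unfold off_zero in H. split; [|split].
- apply ex_derive_ext with (fun t => abs_deriv (xi_order w) xi * Derive_n q (x_order w) t).
  + intro; rewrite pderiv_abs_mult; auto.
  + apply ex_derive_scal, Hq.
- apply ex_derive_ext_loc with (fun e => Derive_n q (x_order w) x * abs_deriv (xi_order w) e).
  + apply filter_imp with (2 := locally_neq0 xi H).
    intros e He; rewrite pderiv_abs_mult; auto; apply Rmult_comm.
  + apply ex_derive_scal; eexists; apply is_derive_abs_deriv, H.
- apply continuous_ext_loc with
    (fun p : R * R => abs_deriv (xi_order w) (snd p) * Derive_n q (x_order w) (fst p)).
  + exists (mkposreal (Rabs xi) (Rabs_pos_lt _ H)).
    intros [u v] [_ Hv]; simpl; rewrite pderiv_abs_mult; auto.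
    unfold ball in Hv; simpl in Hv; unfold AbsRing_ball, abs, minus, plus, opp in Hv; simpl in Hv.
    intro E; subst v; rewrite Rplus_0_l, Rabs_Ropp in Hv; lra.
  + apply (continuous_mult (fun p : R * R => abs_deriv (xi_order w) (snd p))
                           (fun p : R * R => Derive_n q (x_order w) (fst p))).
    * apply (continuous_comp snd (abs_deriv (xi_order w))); [apply continuous_snd|].
      apply continuous_abs_deriv, H.
    * apply (continuous_comp fst (Derive_n q (x_order w))); [apply continuous_fst|].
      apply (ex_derive_continuous (Derive_n q (x_order w))), Hq.
Qed.

Lemma Rmult_sign xi : xi * sign xi = Rabs xi.
Proof.
destruct (Rtotal_order xi 0) as [H|[H|H]].
- rewrite sign_eq_m1, Rabs_left; auto; ring.
- subst; rewrite Rabs_R0; ring.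
- rewrite sign_eq_1, Rabs_right; auto; lra.
Qed.

Lemma poisson_abs_mult (X q : R -> R) x xi : xi <> 0 ->
  poisson (fun x xi => xi * X x) (fun x xi => Rabs xi * q x) x xi
  = Rabs xi * (X x * Derive q x - Derive X x * q x).
Proof.
intro H; unfold poisson.
rewrite (Derive_ext (fun e => e * X x) (fun e => X x * e)) by (intro; apply Rmult_comm).
rewrite Derive_scal, Derive_id, !Derive_scal.
rewrite (Derive_ext (fun e => Rabs e * q x) (fun e => q x * abs_deriv 0 e))
  by (intro; apply Rmult_comm).
rewrite Derive_scal, (is_derive_unique _ _ _ (is_derive_abs_deriv 0 xi H)); simpl.
rewrite <- (Rmult_sign xi); ring.
Qed.

Lemma RInt_ge_on_subinterval f a b c d m : (forall x, continuous f x) ->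
  a <= c <= d -> d <= b -> (forall x, a <= x <= b -> 0 <= f x) ->
  (forall x, c <= x <= d -> m <= f x) -> m * (d - c) <= RInt f a b.
Proof.
intros Hc Hac Hdb Hpos Hm.
assert (Ex : forall u v, ex_RInt f u v)
  by (intros; apply (@ex_RInt_continuous R_CompleteNormedModule); auto).
rewrite <- (RInt_Chasles f a c b), <- (RInt_Chasles f c d b) by auto.
assert (0 <= RInt f a c) by (apply RInt_ge_0; [lra|apply Ex|intros; apply Hpos; lra]).
assert (0 <= RInt f d b) by (apply RInt_ge_0; [lra|apply Ex|intros; apply Hpos; lra]).
assert (m * (d - c) <= RInt f c d); [|unfold plus; simpl; lra].
replace (m * (d - c)) with (RInt (fun _ => m) c d)
  by (rewrite RInt_const; apply Rmult_comm).
apply RInt_le; try lra; auto.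
- apply ex_RInt_const.
- intros; apply Hm; lra.
Qed.

Section Construction.

Variable X : R -> R.
Hypothesis SX : smooth X.
Hypothesis PX : periodic1 X.

Lemma nondegenerate_lower_bound : (forall x, X x = 0 -> Derive X x <> 0) ->
  exists c, 0 < c /\ forall x, c <= Derive X x ^ 2 + X x ^ 2.
Proof.
intro Hnd.
destruct (periodic1_attains_min (fun x => Derive X x ^ 2 + X x ^ 2)) as [y Hy].
- intro x; rewrite periodic1_Derive, PX; auto.
- apply smooth_continuous, smooth_plus; apply smooth_pow; auto using smooth_Derive.
- exists (Derive X y ^ 2 + X y ^ 2); split; auto.
  destruct (Req_dec (X y) 0) as [E|E].
  + pose proof (Hnd y E); rewrite E; nra.
  + nra.
Qed.

Lemma absorb_second_derivative c : 0 < c -> (forall x, c <= Derive X x ^ 2 + X x ^ 2) ->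
  exists A, 0 < A /\
    forall x, 3 * c / 4 <= Derive X x ^ 2 - X x * Derive (Derive X) x + A * X x ^ 2.
Proof.
intros Hc Hlow.
set (X'' := Derive (Derive X)).
assert (SX'' : smooth X'') by (apply smooth_Derive, smooth_Derive, SX).
destruct (periodic1_attains_max (fun x => X'' x ^ 2)) as [y HK].
- intro x; unfold X''; rewrite periodic1_Derive;
    auto using smooth_Derive, periodic1_Derive.
- apply smooth_continuous, smooth_pow, SX''.
set (K := X'' y ^ 2) in HK.
assert (0 <= K / c) by (apply Rdiv_le_0_compat; [apply pow2_ge_0|exact Hc]).
exists (K / c + 1); split; [lra|].
intro x; specialize (Hlow x); specialize (HK x).
set (p := X x * X'' x).
(* [p <= c/4 + p^2/c <= c/4 + K X^2/c] *)
assert (Hsq : 0 <= (c / 2 - p) ^ 2 / c) by (apply Rdiv_le_0_compat; [apply pow2_ge_0|exact Hc]).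
assert (Hp : p ^ 2 / c <= K / c * X x ^ 2).
{ unfold Rdiv; rewrite Rmult_assoc, (Rmult_comm (/ c)), <- Rmult_assoc.
  apply Rmult_le_compat_r; [left; apply Rinv_0_lt_compat, Hc|].
  unfold p; assert (0 <= X x ^ 2) by nra; nra. }
assert (E : (c / 2 - p) ^ 2 / c = c / 4 - p + p ^ 2 / c) by (field; lra).
lra.
Qed.

Lemma sq_le_near_zero x0 L : X x0 = 0 ->
  (forall y, x0 - 1 <= y <= x0 + 1 -> Derive X y ^ 2 <= L) ->
  forall y, x0 - 1 <= y <= x0 + 1 -> X y ^ 2 <= L * (y - x0) ^ 2.
Proof.
intros H0 HL y Hy.
destruct (MVT_gen X x0 y (Derive X)) as [c [Hc E]].
- intros; apply smooth_is_derive, SX.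
- intros; apply continuity_pt_filterlim, smooth_continuous, SX.
- rewrite H0, Rminus_0_r in E; rewrite E, Rpow_mult_distr.
  apply Rmult_le_compat_r; [apply pow2_ge_0|].
  apply HL; revert Hc; unfold Rmin, Rmax; destruct (Rle_dec x0 y); lra.
Qed.

Lemma RInt_inv_sq_large x0 : X x0 = 0 -> forall M, 0 < M ->
  exists eta, 0 < eta /\ M <= RInt (fun x => / (X x ^ 2 + eta)) (x0 - PI) (x0 + PI).
Proof.
intros H0 M HM. pose proof PI2_1.
destruct (continuity_ab_maj (fun y => Derive X y ^ 2) (x0 - 1) (x0 + 1)) as [ym [Hym _]];
  [lra|intros; apply continuity_pt_filterlim, smooth_continuous, smooth_pow, smooth_Derive, SX|].
set (L := Derive X ym ^ 2 + 1).
assert (HL : 0 < L) by (unfold L; pose proof (pow2_ge_0 (Derive X ym)); lra).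
set (s := Rmin 1 (/ (L * M))).
assert (Hs : 0 < s)
  by (apply Rmin_glb_lt; [lra|apply Rinv_0_lt_compat, Rmult_lt_0_compat; auto]).
assert (Hs1 : s <= 1) by apply Rmin_l.
assert (HLs : L * s <= / M).
{ apply Rmult_le_reg_l with (/ L); [apply Rinv_0_lt_compat, HL|].
  rewrite <- Rmult_assoc, Rinv_l, Rmult_1_l, <- Rinv_mult by lra; apply Rmin_r. }
set (eta := L * s ^ 2).
assert (He : 0 < eta) by (apply Rmult_lt_0_compat; [exact HL|apply pow_lt, Hs]).
exists eta; split; auto.
(* near [x0], [X^2 <= L (x - x0)^2 <= eta], so the integrand is at least [1/(2 eta)] *)
assert (Hint : / (2 * eta) * (x0 + s - (x0 - s)) <=
               RInt (fun x => / (X x ^ 2 + eta)) (x0 - PI) (x0 + PI)).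
{ apply RInt_ge_on_subinterval; try lra.
  - intro x; apply smooth_continuous, smooth_inv;
      [intro y; pose proof (pow2_ge_0 (X y)); lra|].
    apply smooth_plus; [apply smooth_pow, SX|apply smooth_const].
  - intros x _; left; apply Rinv_0_lt_compat; pose proof (pow2_ge_0 (X x)); lra.
  - intros x Hx; apply Rinv_le_contravar; [pose proof (pow2_ge_0 (X x)); lra|].
    assert (X x ^ 2 <= L * (x - x0) ^ 2).
    { apply sq_le_near_zero; [exact H0| |lra].
      intros y Hy; specialize (Hym y Hy); simpl in Hym |- *; unfold L; lra. }
    assert ((x - x0) ^ 2 <= s ^ 2) by nra.
    unfold eta; nra. }
replace (/ (2 * eta) * (x0 + s - (x0 - s))) with (/ (L * s)) in Hint by (unfold eta; field; lra).
assert (M <= / (L * s)); [|lra].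
rewrite <- (Rinv_inv M); apply Rinv_le_contravar; auto; nra.
Qed.

Lemma exists_mean_zero_weight x0 : X x0 = 0 -> forall A B, 0 < A -> 0 < B ->
  exists w, smooth w /\ periodic1 w /\ RInt w (x0 - PI) (x0 + PI) = 0 /\
    forall x, A * X x ^ 2 - B <= X x ^ 2 * w x.
Proof.
intros H0 A B HA HB. pose proof PI_RGT_0.
destruct (RInt_inv_sq_large x0 H0 (2 * PI * A / B)) as [eta [He HJ]].
{ apply Rdiv_lt_0_compat; nra. }
set (f := fun x => / (X x ^ 2 + eta)) in HJ.
set (J := RInt f (x0 - PI) (x0 + PI)) in HJ.
assert (Hpos : forall x, 0 < X x ^ 2 + eta) by (intro x; pose proof (pow2_ge_0 (X x)); lra).
assert (Sf : smooth f).
{ apply smooth_inv; [intro x; specialize (Hpos x); lra|].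
  apply smooth_plus; [apply smooth_pow, SX|apply smooth_const]. }
exists (fun x => B * (J / (2 * PI) - f x)); split; [|split; [|split]].
- apply smooth_mult; [apply smooth_const|apply smooth_minus; auto using smooth_const].
- intro x; unfold f; rewrite PX; reflexivity.
- replace 0 with (B * ((x0 + PI - (x0 - PI)) * (J / (2 * PI)) - J)) by (field; lra).
  apply is_RInt_unique, (is_RInt_scal (V := R_CompleteNormedModule) (fun x => J / (2 * PI) - f x)).
  apply (is_RInt_minus (V := R_CompleteNormedModule) (fun _ => J / (2 * PI)) f).
  + apply (is_RInt_const (V := R_CompleteNormedModule)).
  + apply (RInt_correct (V := R_CompleteNormedModule)), smooth_ex_RInt, Sf.
- intro x.
  assert (Hf : X x ^ 2 * f x <= 1).
  { unfold f; specialize (Hpos x).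
    rewrite <- (Rinv_r (X x ^ 2 + eta)) by lra.
    apply Rmult_le_compat_r; [left; apply Rinv_0_lt_compat|]; lra. }
  assert (HA' : A <= B * (J / (2 * PI))).
  { replace A with (B * (2 * PI * A / B / (2 * PI))) by (field; lra).
    apply Rmult_le_compat_l; [lra|].
    apply Rmult_le_compat_r; [left; apply Rinv_0_lt_compat; lra|exact HJ]. }
  pose proof (pow2_ge_0 (X x)); nra.
Qed.

Lemma wronskian_ansatz V w x : (forall y, is_derive V y (w y)) ->
  let q := fun y => - Derive X y + X y * V y in
  X x * Derive q x - Derive X x * q x
  = Derive X x ^ 2 - X x * Derive (Derive X) x + X x ^ 2 * w x.
Proof.
intros DV q.
assert (Dq : is_derive q x (- Derive (Derive X) x + (Derive X x * V x + X x * w x))).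
{ apply (@is_derive_plus R_AbsRing R_NormedModule).
  - apply (@is_derive_opp R_AbsRing R_NormedModule), smooth_is_derive, smooth_Derive, SX.
  - apply (@is_derive_mult R_AbsRing); [apply smooth_is_derive, SX|apply DV|].
    intros; apply Rmult_comm. }
rewrite (is_derive_unique _ _ _ Dq); unfold q; ring.
Qed.

Lemma exists_wronskian_positive : (exists x0, X x0 = 0) ->
  (forall x, X x = 0 -> Derive X x <> 0) ->
  exists q delta, smooth q /\ periodic1 q /\ 0 < delta /\
    (forall x, delta <= X x * Derive q x - Derive X x * q x) /\ exists x1, q x1 = -1.
Proof.
intros [x0 H0] Hnd. pose proof PI_RGT_0.
destruct (nondegenerate_lower_bound Hnd) as [c [Hc Hlow]].
destruct (absorb_second_derivative c Hc Hlow) as [A [HA HAbs]].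
destruct (exists_mean_zero_weight x0 H0 A (c / 4) HA) as [w [Sw [Pw [Hw0 Hw]]]]; [lra|].
set (v := fun x => RInt w (x0 - PI) x).
assert (Pv : periodic1 v).
{ apply periodic1_RInt; auto. replace (x0 - PI + 2 * PI) with (x0 + PI) by ring; exact Hw0. }
assert (Dv : forall x, is_derive v x (w x))
  by (apply is_derive_RInt_continuous, smooth_continuous, Sw).
destruct (classic (exists x1, X x1 <> 0)) as [[x1 Hx1]|Hall].
2: { exfalso; apply (Hnd x0 H0).
     rewrite (Derive_ext X (fun _ => 0)); [apply Derive_const|].
     intro t; apply NNPP; intro E; apply Hall; exists t; exact E. }
(* the free constant of integration is chosen so that [q x1 = -1] *)
set (t := (Derive X x1 - 1) / X x1 - v x1).
exists (fun y => - Derive X y + X y * (v y + t)), (c / 2).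
split; [|split; [|split; [|split]]].
- apply smooth_plus; [apply smooth_opp, smooth_Derive, SX|].
  apply smooth_mult; [exact SX|apply smooth_plus; [apply smooth_RInt, Sw|apply smooth_const]].
- intro x; rewrite periodic1_Derive, PX, Pv; auto.
- lra.
- intro x.
  rewrite (wronskian_ansatz (fun y => v y + t) w x).
  + specialize (HAbs x); specialize (Hw x); lra.
  + intro y; rewrite <- (Rplus_0_r (w y)).
    apply (@is_derive_plus R_AbsRing R_NormedModule); [apply Dv|apply (@is_derive_const R_AbsRing)].
- exists x1; unfold t; field; exact Hx1.
Qed.

End Construction.

Theorem mainTheorem16 (X : R -> R)
  (HXs : smooth1 X) (HXp : periodic1 X)
  (Hzero : exists x0, X x0 = 0)
  (Hnd : forall x0, X x0 = 0 -> Derive X x0 <> 0) :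
  let h := fun x xi : R => xi * X x in
  exists (a : R -> R -> R) (delta : R),
    periodic2 a /\ smooth2_on off_zero a /\ pos_homogeneous 1 a /\
    0 < delta /\
    (forall x xi, xi <> 0 -> poisson h a x xi >= delta * Rabs xi) /\
    (exists W : R -> Prop,
        open W /\ (exists x, W x) /\
        forall x xi, W x -> xi <> 0 -> a x xi <= - Rabs xi / 2).
Proof.
intro h. apply smooth1_smooth in HXs.
destruct (exists_wronskian_positive X HXs HXp Hzero Hnd)
  as [q [delta [Sq [Pq [Hdelta [Hwr [x1 Hx1]]]]]]].
exists (fun x xi => Rabs xi * q x), delta.
split; [|split; [|split; [|split; [|split]]]].
- intros x xi; rewrite Pq; reflexivity.
- apply smooth2_on_abs_mult, smooth1_smooth, Sq.
- intros x xi lam Hxi Hlam.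
  rewrite Rpower_1, Rabs_mult, (Rabs_right lam) by lra; ring.
- exact Hdelta.
- intros x xi Hxi; unfold h; rewrite poisson_abs_mult by exact Hxi.
  specialize (Hwr x); pose proof (Rabs_pos xi); nra.
- exists (fun x => q x < - 1 / 2); split; [|split].
  + apply (open_comp q (fun u => u < - 1 / 2)); [|apply open_lt].
    intros x _; apply smooth_continuous, Sq.
  + exists x1; lra.
  + intros x xi Hx _; pose proof (Rabs_pos xi); nra.
Qed.
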